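(* Let $S\subset\mathbf R^4$ be a surface and $p\in S$ a flat inflection point. Then for every unit normal vector $\nu\in N_pS$, the image of $S$ near $p$ under the orthogonal projection of $\mathbf R^4$ onto the hyperplane $\nu^\perp\cong\mathbf R^3$ (a surface in $\mathbf R^3$ near the image of $p$) has zero Gaussian curvature at the image of $p$, i.e. the image of $p$ lies on the parabolic curve of that projected surface.
   Context: Use an adapted orthonormal frame $e_1,e_2$ (tangent), $e_3,e_4$ (normal) at $p$; the second fundamental form is $\mathbf{II}(u)=(au_1^2+2bu_1u_2+cu_2^2)e_3+(eu_1^2+2fu_1u_2+gu_2^2)e_4$ for $u=u_1e_1+u_2e_2$. The curvature ellipse at $p$ is $\{\mathbf{II}(u):|u|=1\}\subset N_pS$ with $p$ as origin. $p$ is an inflection point if the curvature ellipse is a (possibly degenerate) segment contained in a line through the origin; it is a flat inflection point if moreover the origin is an endpoint of this segment. Equivalently, flat inflection points are the points where $\Delta=0$ and $K=0$, with $K=(ac-b^2)+(eg-f^2)$ and $\Delta=(ac-b^2)(eg-f^2)-\tfrac14(ag+ce-2bf)^2$. *)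

From Stdlib Require Import Reals List.
From Coquelicot Require Import Coquelicot.
Open Scope R_scope.

Definition PDx (h : R -> R -> R) : R -> R -> R :=
  fun x y => Derive (fun t => h t y) x.
Definition PDy (h : R -> R -> R) : R -> R -> R :=
  fun x y => Derive (fun t => h x t) y.

Fixpoint iterD (w : list bool) (h : R -> R -> R) : R -> R -> R :=
  match w with
  | nil => h
  | cons true w' => PDx (iterD w' h)
  | cons false w' => PDy (iterD w' h)
  end.

Definition smooth2 (h : R -> R -> R) : Prop :=
  forall (w : list bool) (x y : R),
    ex_derive (fun t => iterD w h t y) x /\ ex_derive (fun t => iterD w h x t) y.

(** Second fundamental form at p in an adapted frame, with coefficients
    a b c (e3-component) and e f g (e4-component); u = u1 e1 + u2 e2. *)
Definition II (a b c e f g : R) (u1 u2 : R) : R * R :=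
  (a * u1 ^ 2 + 2 * b * u1 * u2 + c * u2 ^ 2,
   e * u1 ^ 2 + 2 * f * u1 * u2 + g * u2 ^ 2).

Definition on_curvature_ellipse (a b c e f g : R) (P : R * R) : Prop :=
  exists u1 u2, u1 ^ 2 + u2 ^ 2 = 1 /\ II a b c e f g u1 u2 = P.

Definition on_segment (A B P : R * R) : Prop :=
  exists s, 0 <= s <= 1 /\
    P = ((1 - s) * fst A + s * fst B, (1 - s) * snd A + s * snd B).

Definition collinear_origin (A B : R * R) : Prop :=
  fst A * snd B - snd A * fst B = 0.

Definition inflection_point (a b c e f g : R) : Prop :=
  exists A B, collinear_origin A B /\
    (forall P, on_curvature_ellipse a b c e f g P <-> on_segment A B P).

Definition flat_inflection_point (a b c e f g : R) : Prop :=
  exists A B, collinear_origin A B /\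
    (forall P, on_curvature_ellipse a b c e f g P <-> on_segment A B P) /\
    (A = (0, 0) \/ B = (0, 0)).

(** The surface near p = 0, in Monge form w.r.t. the adapted frame
    e1, e2, e3, e4 (taken as the standard basis of R^4). *)
Definition monge_surface (f1 f2 : R -> R -> R) (x y : R) : R * R * R * R :=
  (x, y, f1 x y, f2 x y).

(** Orthogonal projection of R^4 onto nu^perp, nu = n3 e3 + n4 e4 a unit
    normal, written in the orthonormal basis (e1, e2, -n4 e3 + n3 e4) of
    nu^perp (identified with R^3). *)
Definition proj_nu (n3 n4 : R) (P : R * R * R * R) : R * R * R :=
  match P with
  | (x1, x2, x3, x4) => (x1, x2, - n4 * x3 + n3 * x4)
  end.

Definition gauss_curv_graph (h : R -> R -> R) (x y : R) : R :=
  (PDx (PDx h) x y * PDy (PDy h) x y - PDy (PDx h) x y ^ 2)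
  / (1 + PDx h x y ^ 2 + PDy h x y ^ 2) ^ 2.

(* At a flat inflection point the second fundamental form takes all its values on a
   half-line {s V | s >= 0} of the normal plane and vanishes in some tangent direction.
   The height function of the projection along nu is h = -n4 f1 + n3 f2, whose Hessian
   at p is the component of II along the line -n4 e3 + n3 e4; it is therefore
   semidefinite (with the sign of that component of V) and vanishes on a unit vector.
   A semidefinite binary quadratic form with a nontrivial zero is degenerate, so
   det Hess h = 0 and the Gaussian curvature of the graph of h vanishes at p. *)

From Stdlib Require Import Reals List Lra Psatz FunctionalExtensionality.
From Coquelicot Require Import Coquelicot.
Open Scope R_scope.

Definition qform (a b c : R) (u1 u2 : R) : R := a * u1 ^ 2 + 2 * b * u1 * u2 + c * u2 ^ 2.

Lemma II_qform a b c e f g u1 u2 :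
  II a b c e f g u1 u2 = (qform a b c u1 u2, qform e f g u1 u2).
Proof. reflexivity. Qed.

Lemma qform_scale a b c r u1 u2 :
  qform a b c (r * u1) (r * u2) = r ^ 2 * qform a b c u1 u2.
Proof. unfold qform; ring. Qed.

Lemma qform_opp a b c u1 u2 : qform (- a) (- b) (- c) u1 u2 = - qform a b c u1 u2.
Proof. unfold qform; ring. Qed.

Lemma qform_lincomb al be a b c e f g u1 u2 :
  qform (al * a + be * e) (al * b + be * f) (al * c + be * g) u1 u2
  = al * qform a b c u1 u2 + be * qform e f g u1 u2.
Proof. unfold qform; ring. Qed.

Lemma qform_ge0_of_unit a b c :
  (forall u1 u2, u1 ^ 2 + u2 ^ 2 = 1 -> 0 <= qform a b c u1 u2) ->
  forall x y, 0 <= qform a b c x y.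
Proof.
  intros Hunit x y.
  destruct (Req_dec (x ^ 2 + y ^ 2) 0) as [Hxy | Hxy].
  - assert (x = 0) by nra; assert (y = 0) by nra; subst.
    unfold qform; lra.
  - set (r := sqrt (x ^ 2 + y ^ 2)).
    assert (Hr : 0 < r) by (apply sqrt_lt_R0; nra).
    assert (Hr2 : r * r = x ^ 2 + y ^ 2) by (apply sqrt_sqrt; nra).
    assert (Hscaled : 0 <= qform a b c (/ r * x) (/ r * y)).
    { apply Hunit. field_simplify; [rewrite <- Hr2; field|]; lra. }
    rewrite qform_scale in Hscaled.
    assert (0 < (/ r) ^ 2) by (apply pow_lt, Rinv_0_lt_compat, Hr).
    nra.
Qed.

Lemma linear_dominated_by_quadratic L q :
  (forall t, 0 <= 2 * t * L + q * t ^ 2) -> L = 0.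
Proof.
  intros H.
  assert (Hq : 0 <= q) by (pose proof (H 1); pose proof (H (-1)); lra).
  set (t := - L / (q + 1)).
  assert (HL : L = - t * (q + 1)) by (unfold t; field; lra).
  pose proof (H t) as Ht; rewrite HL in Ht.
  assert (Ht0 : t = 0) by nra.
  rewrite HL, Ht0; ring.
Qed.

(* At a zero u0 of a nonnegative form the polar form vanishes on every vector,
   so u0 is in the kernel of [[a, b], [b, c]]. *)
Lemma qform_ge0_zero_det a b c x0 y0 :
  (forall x y, 0 <= qform a b c x y) ->
  x0 ^ 2 + y0 ^ 2 = 1 -> qform a b c x0 y0 = 0 ->
  a * c - b ^ 2 = 0.
Proof.
  intros Hpsd Hunit Hzero.
  assert (Hker1 : a * x0 + b * y0 = 0).
  { apply (linear_dominated_by_quadratic _ a); intro t.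
    pose proof (Hpsd (x0 + t) y0); unfold qform in *; nra. }
  assert (Hker2 : b * x0 + c * y0 = 0).
  { apply (linear_dominated_by_quadratic _ c); intro t.
    pose proof (Hpsd x0 (y0 + t)); unfold qform in *; nra. }
  assert (Hcramer : (x0 ^ 2 + y0 ^ 2) * (a * c - b ^ 2)
    = x0 * (c * (a * x0 + b * y0) - b * (b * x0 + c * y0))
      + y0 * (a * (b * x0 + c * y0) - b * (a * x0 + b * y0))) by ring.
  rewrite Hunit, Hker1, Hker2 in Hcramer; lra.
Qed.

Lemma qform_semidefinite_zero_det a b c x0 y0 :
  (forall u1 u2, u1 ^ 2 + u2 ^ 2 = 1 -> 0 <= qform a b c u1 u2) \/
  (forall u1 u2, u1 ^ 2 + u2 ^ 2 = 1 -> qform a b c u1 u2 <= 0) ->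
  x0 ^ 2 + y0 ^ 2 = 1 -> qform a b c x0 y0 = 0 ->
  a * c - b ^ 2 = 0.
Proof.
  intros [Hpos | Hneg] Hunit Hzero.
  - exact (qform_ge0_zero_det _ _ _ _ _ (qform_ge0_of_unit _ _ _ Hpos) Hunit Hzero).
  - assert (Hpos : forall x y, 0 <= qform (- a) (- b) (- c) x y).
    { apply qform_ge0_of_unit; intros u1 u2 Hu.
      rewrite qform_opp; pose proof (Hneg u1 u2 Hu); lra. }
    assert (Hzero' : qform (- a) (- b) (- c) x0 y0 = 0) by (rewrite qform_opp, Hzero; ring).
    pose proof (qform_ge0_zero_det _ _ _ _ _ Hpos Hunit Hzero'); nra.
Qed.

Lemma flat_inflection_ray a b c e f g :
  flat_inflection_point a b c e f g ->
  exists V : R * R,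
    (forall u1 u2, u1 ^ 2 + u2 ^ 2 = 1 ->
       exists s, 0 <= s /\ II a b c e f g u1 u2 = (s * fst V, s * snd V)) /\
    on_curvature_ellipse a b c e f g (0, 0).
Proof.
  intros [A [B [_ [Hellipse Hend]]]].
  assert (Hseg : forall u1 u2, u1 ^ 2 + u2 ^ 2 = 1 ->
                   on_segment A B (II a b c e f g u1 u2))
    by (intros u1 u2 Hu; apply Hellipse; exists u1, u2; auto).
  destruct Hend as [-> | ->].
  - exists B; split.
    + intros u1 u2 Hu; destruct (Hseg u1 u2 Hu) as [s [Hs ->]].
      exists s; split; [lra|]; simpl; f_equal; ring.
    + apply Hellipse; exists 0; split; [lra|]; simpl; f_equal; ring.
  - exists A; split.
    + intros u1 u2 Hu; destruct (Hseg u1 u2 Hu) as [s [Hs ->]].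
      exists (1 - s); split; [lra|]; simpl; f_equal; ring.
    + apply Hellipse; exists 1; split; [lra|]; simpl; f_equal; ring.
Qed.

Lemma flat_inflection_projection_degenerate a b c e f g al be :
  flat_inflection_point a b c e f g ->
  (al * a + be * e) * (al * c + be * g) - (al * b + be * f) ^ 2 = 0.
Proof.
  intros Hflat.
  destruct (flat_inflection_ray _ _ _ _ _ _ Hflat) as [V [Hray [x0 [y0 [Hu0 Hzero]]]]].
  rewrite II_qform in Hzero; injection Hzero as Hz1 Hz2.
  set (k := al * fst V + be * snd V).
  assert (Hproj : forall u1 u2, u1 ^ 2 + u2 ^ 2 = 1 -> exists s, 0 <= s /\
            qform (al * a + be * e) (al * b + be * f) (al * c + be * g) u1 u2 = s * k).
  { intros u1 u2 Hu; destruct (Hray u1 u2 Hu) as [s [Hs HII]].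
    rewrite II_qform in HII; injection HII as H1 H2.
    exists s; split; [exact Hs|].
    rewrite qform_lincomb, H1, H2; unfold k; ring. }
  apply (qform_semidefinite_zero_det _ _ _ x0 y0); [| exact Hu0 |].
  - destruct (Rle_lt_dec 0 k) as [Hk | Hk]; [left | right];
      intros u1 u2 Hu; destruct (Hproj u1 u2 Hu) as [s [Hs ->]]; nra.
  - rewrite qform_lincomb, Hz1, Hz2; ring.
Qed.

Definition lincomb (al be : R) (F G : R -> R -> R) : R -> R -> R :=
  fun x y => al * F x y + be * G x y.

Lemma iterD_app w w' h : iterD (w ++ w') h = iterD w (iterD w' h).
Proof. induction w as [|[|] w IH]; simpl; rewrite ?IH; reflexivity. Qed.

Lemma smooth2_PDx h : smooth2 h -> smooth2 (PDx h).
Proof.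
  intros Hh w x y.
  change (PDx h) with (iterD (true :: nil) h); rewrite <- iterD_app; apply Hh.
Qed.

Lemma smooth2_PDy h : smooth2 h -> smooth2 (PDy h).
Proof.
  intros Hh w x y.
  change (PDy h) with (iterD (false :: nil) h); rewrite <- iterD_app; apply Hh.
Qed.

Lemma PDx_lincomb al be F G :
  smooth2 F -> smooth2 G -> PDx (lincomb al be F G) = lincomb al be (PDx F) (PDx G).
Proof.
  intros HF HG; apply functional_extensionality; intro x;
    apply functional_extensionality; intro y.
  unfold PDx, lincomb.
  rewrite Derive_plus, !Derive_scal; [reflexivity | |]; apply ex_derive_scal;
    [exact (proj1 (HF nil x y)) | exact (proj1 (HG nil x y))].
Qed.

Lemma PDy_lincomb al be F G :
  smooth2 F -> smooth2 G -> PDy (lincomb al be F G) = lincomb al be (PDy F) (PDy G).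
Proof.
  intros HF HG; apply functional_extensionality; intro x;
    apply functional_extensionality; intro y.
  unfold PDy, lincomb.
  rewrite Derive_plus, !Derive_scal; [reflexivity | |]; apply ex_derive_scal;
    [exact (proj2 (HF nil x y)) | exact (proj2 (HG nil x y))].
Qed.

Lemma gauss_curv_graph_eq0 h x y :
  PDx (PDx h) x y * PDy (PDy h) x y - PDy (PDx h) x y ^ 2 = 0 ->
  gauss_curv_graph h x y = 0.
Proof. intros Hdet; unfold gauss_curv_graph, Rdiv; rewrite Hdet; ring. Qed.

Theorem mainTheorem7 (f1 f2 : R -> R -> R) :
  smooth2 f1 -> smooth2 f2 ->
  (* p = origin lies on S and e1, e2 span T_pS (adapted frame) *)
  f1 0 0 = 0 -> f2 0 0 = 0 ->
  PDx f1 0 0 = 0 -> PDy f1 0 0 = 0 -> PDx f2 0 0 = 0 -> PDy f2 0 0 = 0 ->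
  (* p is a flat inflection point, II read off from the Monge form *)
  flat_inflection_point
    (PDx (PDx f1) 0 0) (PDy (PDx f1) 0 0) (PDy (PDy f1) 0 0)
    (PDx (PDx f2) 0 0) (PDy (PDx f2) 0 0) (PDy (PDy f2) 0 0) ->
  forall n3 n4 : R, n3 ^ 2 + n4 ^ 2 = 1 ->
    (* the projected surface is the graph of the third coordinate *)
    gauss_curv_graph
      (fun x y => snd (proj_nu n3 n4 (monge_surface f1 f2 x y))) 0 0 = 0.
Proof.
  intros Hf1 Hf2 _ _ _ _ _ _ Hflat n3 n4 _.
  change (fun x y => snd (proj_nu n3 n4 (monge_surface f1 f2 x y)))
    with (lincomb (- n4) n3 f1 f2).
  apply gauss_curv_graph_eq0.
  rewrite (PDx_lincomb _ _ _ _ Hf1 Hf2), (PDy_lincomb _ _ _ _ Hf1 Hf2),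
    (PDx_lincomb _ _ _ _ (smooth2_PDx _ Hf1) (smooth2_PDx _ Hf2)),
    (PDy_lincomb _ _ _ _ (smooth2_PDx _ Hf1) (smooth2_PDx _ Hf2)),
    (PDy_lincomb _ _ _ _ (smooth2_PDy _ Hf1) (smooth2_PDy _ Hf2)).
  exact (flat_inflection_projection_degenerate _ _ _ _ _ _ _ _ Hflat).
Qed.
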